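(* Let $(W,S)$ be a Coxeter system with $S$ finite. Then $\operatorname{Ad}(Q_W)$ is generated by the elements $e_s$ ($s\in S$).
   Context: A Coxeter system $(W,S)$: $S$ finite, $m:S\times S\to\mathbb{N}\cup\{\infty\}$ with $m(s,s)=1$, $2\le m(s,t)=m(t,s)\le\infty$ for $s\ne t$, $W=\langle s\in S\mid (st)^{m(s,t)}=1\ (m(s,t)<\infty)\rangle$. The Coxeter quandle is $Q_W=\bigcup_{w\in W}w^{-1}Sw$ with operation $x\ast y=yxy$, and $\operatorname{Ad}(Q_W)=\langle e_x\ (x\in Q_W)\mid e_y^{-1}e_xe_y=e_{x\ast y}\ (x,y\in Q_W)\rangle$. *)

From mathcomp Require Import all_boot.
Set Implicit Arguments. Unset Strict Implicit. Unset Printing Implicit Defensive.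

(* A letter (a, false) stands for the generator a, (a, true) for a^-1. *)
Definition letter (A : Type) := (A * bool)%type.
Definition word (A : Type) := seq (letter A).

Definition inv_word (A : Type) (w : word A) : word A :=
  rev (map (fun p => (p.1, ~~ p.2)) w).

Inductive pres_eq (A : Type) (R : word A -> word A -> Prop) :
    word A -> word A -> Prop :=
| pe_refl w : pres_eq R w w
| pe_sym u v : pres_eq R u v -> pres_eq R v u
| pe_trans u v w : pres_eq R u v -> pres_eq R v w -> pres_eq R u w
| pe_rel u v : R u v -> pres_eq R u v
| pe_free (a : A) (b : bool) : pres_eq R [:: (a, b); (a, ~~ b)] [::]
| pe_cat u u' v v' :
    pres_eq R u u' -> pres_eq R v v' -> pres_eq R (u ++ v) (u' ++ v').

(* Coxeter matrices: m s t = None encodes m(s,t) = infinity. *)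
Definition coxeter_matrix (S : finType) (m : S -> S -> option nat) : Prop :=
  (forall s, m s s = Some 1%N) /\
  (forall s t, m s t = m t s) /\
  (forall s t, s != t ->
     match m s t with Some k => (2 <= k)%N | None => true end).

Definition coxeter_rel (S : finType) (m : S -> S -> option nat)
    (u v : word S) : Prop :=
  exists s t k, m s t = Some k /\
    u = flatten (nseq k [:: (s, false); (t, false)]) /\ v = [::].

Definition cox_eq (S : finType) (m : S -> S -> option nat) :=
  pres_eq (@coxeter_rel S m).

(* u represents an element of Q_W = \bigcup_w w^-1 S w. *)
Definition is_reflection (S : finType) (m : S -> S -> option nat)
    (u : word S) : Prop :=
  exists (w : word S) (s : S), cox_eq m u (inv_word w ++ (s, false) :: w).

(* Generators e_x of Ad(Q_W), indexed by word representatives of x in Q_W. *)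
Definition QW (S : finType) (m : S -> S -> option nat) : Type :=
  {u : word S | is_reflection m u}.

(* Relations of Ad(Q_W):
   - e_x = e_y whenever x and y represent the same element of Q_W;
   - e_y^-1 e_x e_y = e_z whenever z represents x * y = y x y. *)
Definition ad_rel (S : finType) (m : S -> S -> option nat)
    (u v : word (QW m)) : Prop :=
  (exists x y : QW m, cox_eq m (proj1_sig x) (proj1_sig y) /\
     u = [:: (x, false)] /\ v = [:: (y, false)]) \/
  (exists x y z : QW m,
     cox_eq m (proj1_sig z) (proj1_sig y ++ proj1_sig x ++ proj1_sig y) /\
     u = [:: (y, true); (x, false); (y, false)] /\ v = [:: (z, false)]).

Definition ad_eq (S : finType) (m : S -> S -> option nat) :=
  pres_eq (@ad_rel S m).

Lemma gen_is_reflection (S : finType) (m : S -> S -> option nat) (s : S) :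
  is_reflection m [:: (s, false)].
Proof. exists [::], s. exact: pe_refl. Qed.

Definition e_gen (S : finType) (m : S -> S -> option nat) (s : S) : QW m :=
  exist _ [:: (s, false)] (gen_is_reflection m s).

(* Every element of Q_W is a conjugate w^-1 s w, and conjugating by the
   letters of w one at a time is exactly the defining relation
   e_t^-1 e_x e_t = e_{t x t} of Ad(Q_W) (t^-1 = t since t^2 = 1).
   So every generator e_x, and then every word, is a product of the e_s. *)
From mathcomp Require Import all_boot.
Set Implicit Arguments. Unset Strict Implicit. Unset Printing Implicit Defensive.

Definition map_letters (A B : Type) (f : A -> B) (v : word A) : word B :=
  map (fun p : letter A => (f p.1, p.2)) v.

Lemma map_letters_cat (A B : Type) (f : A -> B) (u v : word A) :
  map_letters f (u ++ v) = map_letters f u ++ map_letters f v.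
Proof. exact: map_cat. Qed.

Lemma map_letters_inv (A B : Type) (f : A -> B) (v : word A) :
  map_letters f (inv_word v) = inv_word (map_letters f v).
Proof. by rewrite /map_letters /inv_word !map_rev -!map_comp. Qed.

Lemma inv_word_rcons (A : Type) (w : word A) (l : letter A) :
  inv_word (rcons w l) = (l.1, ~~ l.2) :: inv_word w.
Proof. by rewrite /inv_word map_rcons rev_rcons. Qed.

Section Presentation.
Variables (A : Type) (R : word A -> word A -> Prop).

Lemma pres_eq_catl u v w : pres_eq R v w -> pres_eq R (u ++ v) (u ++ w).
Proof. by move=> Hvw; apply: pe_cat => //; apply: pe_refl. Qed.

Lemma pres_eq_catr u v w : pres_eq R v w -> pres_eq R (v ++ u) (w ++ u).
Proof. by move=> Hvw; apply: pe_cat => //; apply: pe_refl. Qed.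

Lemma pres_eq_cancel_letter (a : A) (b : bool) (w : word A) :
  pres_eq R ([:: (a, b); (a, ~~ b)] ++ w) w.
Proof. by rewrite -[X in pres_eq _ _ X]cat0s; apply/pres_eq_catr/pe_free. Qed.

Lemma pres_eq_mulV (w : word A) : pres_eq R (w ++ inv_word w) [::].
Proof.
elim: w => [|[a b] w IHw] /=; first exact: pe_refl.
rewrite /inv_word rev_cons -cats1 -/(inv_word w).
apply: (pe_trans (v := [:: (a, b)] ++ [:: (a, ~~ b)])); last exact: pe_free.
rewrite catA -cat_cons; apply: pres_eq_catr.
by rewrite -[X in pres_eq _ _ X]cats0 -cat1s; apply: pres_eq_catl.
Qed.

Lemma pres_eq_inv_letter (a : A) (w : word A) :
  pres_eq R [:: (a, false)] w -> pres_eq R [:: (a, true)] (inv_word w).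
Proof.
move=> Haw.
apply: (pe_trans (v := [:: (a, true)] ++ (w ++ inv_word w))).
  by rewrite -{1}[[:: (a, true)]]cats0; apply/pres_eq_catl/pe_sym/pres_eq_mulV.
apply: (pe_trans (v := [:: (a, true)] ++ ([:: (a, false)] ++ inv_word w))).
  by apply/pres_eq_catl/pres_eq_catr/pe_sym.
by rewrite catA; apply: (pres_eq_cancel_letter a true).
Qed.

Lemma pres_eq_generated (B : Type) (f : B -> A) :
  (forall a, exists v, pres_eq R [:: (a, false)] (map_letters f v)) ->
  forall u, exists v, pres_eq R u (map_letters f v).
Proof.
move=> gen; elim=> [|[a b] u [v Huv]]; first by exists [::]; apply: pe_refl.
have [va Hva] : exists va, pres_eq R [:: (a, b)] (map_letters f va).
  have [va Hva] := gen a; case: b; last by exists va.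
  by exists (inv_word va); rewrite map_letters_inv; apply: pres_eq_inv_letter.
by exists (va ++ v); rewrite map_letters_cat -cat1s; apply: pe_cat.
Qed.

End Presentation.

Section Coxeter.
Variables (S : finType) (m : S -> S -> option nat).
Hypothesis m_coxeter : coxeter_matrix m.

Lemma cox_eq_letter (t : S) (b : bool) : cox_eq m [:: (t, b)] [:: (t, false)].
Proof.
case: b; last exact: pe_refl.
have tt1 : cox_eq m [:: (t, false); (t, false)] [::].
  by apply: pe_rel; exists t, t, 1%N; case: m_coxeter => ->.
apply: (pe_trans (v := [:: (t, true)] ++ [:: (t, false); (t, false)])).
  by rewrite -{1}[[:: (t, true)]]cats0; apply/pres_eq_catl/pe_sym.
exact: (pres_eq_cancel_letter _ t true).
Qed.

Lemma conj_is_reflection (w : word S) (s : S) :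
  is_reflection m (inv_word w ++ (s, false) :: w).
Proof. by exists w, s; apply: pe_refl. Qed.

Definition conj_gen (w : word S) (s : S) : QW m :=
  exist _ _ (conj_is_reflection w s).

Lemma ad_eq_cox_eq (x y : QW m) :
  cox_eq m (proj1_sig x) (proj1_sig y) ->
  @ad_eq S m [:: (x, false)] [:: (y, false)].
Proof. by move=> Hxy; apply: pe_rel; left; exists x, y. Qed.

Lemma ad_eq_conj (x y z : QW m) :
  cox_eq m (proj1_sig z) (proj1_sig y ++ proj1_sig x ++ proj1_sig y) ->
  @ad_eq S m [:: (y, true); (x, false); (y, false)] [:: (z, false)].
Proof. by move=> Hz; apply: pe_rel; right; exists x, y, z. Qed.

Lemma conj_gen_rcons (w : word S) (s t : S) (b : bool) :
  cox_eq m (proj1_sig (conj_gen (rcons w (t, b)) s))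
    ([:: (t, false)] ++ proj1_sig (conj_gen w s) ++ [:: (t, false)]).
Proof.
have -> : proj1_sig (conj_gen (rcons w (t, b)) s) =
    [:: (t, ~~ b)] ++ proj1_sig (conj_gen w s) ++ [:: (t, b)].
  by rewrite /= inv_word_rcons -cats1 -catA.
by apply: pe_cat; [|apply: pres_eq_catl]; apply: cox_eq_letter.
Qed.

Lemma conj_gen_generated (w : word S) (s : S) :
  exists v, @ad_eq S m [:: (conj_gen w s, false)] (map_letters (e_gen m) v).
Proof.
elim/last_ind: w => [|w [t b] [v IHv]].
  by exists [:: (s, false)]; apply: ad_eq_cox_eq; apply: pe_refl.
exists ([:: (t, true)] ++ v ++ [:: (t, false)]).
apply: (pe_trans (pe_sym (ad_eq_conj (y := e_gen m t) (conj_gen_rcons w s t b)))).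
rewrite !map_letters_cat -cat1s.
by apply: pres_eq_catl; rewrite -cat1s; apply: pres_eq_catr.
Qed.

Lemma reflection_generated (x : QW m) :
  exists v, @ad_eq S m [:: (x, false)] (map_letters (e_gen m) v).
Proof.
case: x => u Hu; have [w [s Hws]] := Hu.
have [v Hv] := conj_gen_generated w s.
by exists v; apply: pe_trans Hv; apply: ad_eq_cox_eq.
Qed.

End Coxeter.

Theorem proposition2p3 (S : finType) (m : S -> S -> option nat) :
  coxeter_matrix m ->
  forall u : word (QW m),
    exists v : word S,
      @ad_eq S m u (map (fun p : letter S => (e_gen m p.1, p.2)) v).
Proof.
move=> m_coxeter; apply: pres_eq_generated.
exact: reflection_generated.
Qed.
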